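(* Let $G=(V,E)$ be a connected graph with $n$ vertices and $m\ge1$ edges $e_1,\dots,e_m$ with positive integer weights $w_1,\dots,w_m$, and let $w_{\max}=\max_i w_i$. Consider the (1+1)~EA for the minimum spanning tree problem started with an arbitrary bit string $x^{(0)}\in\{0,1\}^m$ that encodes a spanning tree of $G$. Then its expected optimization time (the expected first time $t$ at which $x^{(t)}$ encodes a minimum spanning tree) is at most $$2\mathrm{e}\, m^2\,(1+\ln m+\ln w_{\max}).$$
   Context: A bit string $x\in\{0,1\}^m$ encodes the edge set $\{e_i: x_i=1\}$; its weight is $w(x)=\sum_{i=1}^m w_ix_i$. The (1+1)~EA for the MST problem, started at a spanning tree $x^{(0)}$: for $t=0,1,2,\dots$, sample $y$ by flipping each bit of $x^{(t)}$ independently with probability $1/m$; set $x^{(t+1)}:=y$ if $y$ encodes a spanning tree of $G$ and $w(y)\le w(x^{(t)})$, and $x^{(t+1)}:=x^{(t)}$ otherwise. (This is the behavior of minimizing the fitness $w(x)+p(x)$ where the penalty $p$ ensures that once a spanning tree is reached, non-spanning-trees are never accepted.) *)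

From Stdlib Require Import Reals List Arith Bool ClassicalEpsilon.
Import ListNotations.
Open Scope R_scope.

(* Graphs: vertices are 0..n-1, edges e_1..e_m are the list es (e_i = nth (i-1) es),
   bit strings x are lists of bools of length m, bit i (0-based) selects edge nth i es. *)

Inductive reach (es : list (nat * nat)) : nat -> nat -> Prop :=
| reach_refl u : reach es u u
| reach_step u v w : (In (u, v) es \/ In (v, u) es) -> reach es v w -> reach es u w.

Definition sel_edges (es : list (nat * nat)) (x : list bool) (keep : nat -> bool)
  : list (nat * nat) :=
  map snd (filter (fun p : nat * (nat * nat) => andb (nth (fst p) x false) (keep (fst p)))
                  (combine (seq 0 (length es)) es)).

(* x encodes a spanning tree: the selected edge set spans (connects) all n vertices
   and is acyclic (no selected edge lies on a cycle: its endpoints are not connected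
   by the other selected edges). *)
Definition is_spanning_tree (n : nat) (es : list (nat * nat)) (x : list bool) : Prop :=
  length x = length es /\
  (forall u v, (u < n)%nat -> (v < n)%nat -> reach (sel_edges es x (fun _ => true)) u v) /\
  (forall i, (i < length es)%nat -> nth i x false = true ->
     ~ reach (sel_edges es x (fun j => negb (Nat.eqb j i)))
             (fst (nth i es (0%nat, 0%nat))) (snd (nth i es (0%nat, 0%nat)))).

Definition weight (ws : list nat) (x : list bool) : nat :=
  fold_right Nat.add 0%nat (map (fun p : bool * nat => if fst p then snd p else 0%nat) (combine x ws)).

Definition is_mst (n : nat) (es : list (nat * nat)) (ws : list nat) (x : list bool) : Prop :=
  is_spanning_tree n es x /\
  forall y, is_spanning_tree n es y -> (weight ws x <= weight ws y)%nat.

Fixpoint bitstrings (m : nat) : list (list bool) :=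
  match m with
  | O => [[]]
  | S k => map (cons false) (bitstrings k) ++ map (cons true) (bitstrings k)
  end.

Definition Rsum {A} (l : list A) (f : A -> R) : R := fold_right Rplus 0 (map f l).

Definition indicator (P : Prop) : R :=
  if excluded_middle_informative P then 1 else 0.

(* Probability that standard bit mutation (rate 1/m) turns x into y. *)
Definition mut_prob (m : nat) (x y : list bool) : R :=
  fold_right Rmult 1
    (map (fun p : bool * bool => if Bool.eqb (fst p) (snd p) then 1 - / INR m else / INR m)
         (combine x y)).

Definition ea_select (n : nat) (es : list (nat * nat)) (ws : list nat) (x y : list bool)
  : list bool :=
  if excluded_middle_informative (is_spanning_tree n es y /\ (weight ws y <= weight ws x)%nat)
  then y else x.

(* surv t z = Pr[ x^(t) = z and x^(s) is not an MST for all s <= t ]. *)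
Fixpoint surv (n : nat) (es : list (nat * nat)) (ws : list nat) (x0 : list bool) (t : nat)
  : list bool -> R :=
  match t with
  | O => fun z => indicator (z = x0 /\ ~ is_mst n es ws z)
  | S t' =>
      let prev := surv n es ws x0 t' in
      fun z => indicator (~ is_mst n es ws z) *
        Rsum (bitstrings (length es)) (fun x => prev x *
          Rsum (bitstrings (length es)) (fun y =>
            mut_prob (length es) x y * indicator (ea_select n es ws x y = z)))
  end.

(* Pr[T > t], T = optimization time (first t with x^(t) an MST). *)
Definition tail_prob (n : nat) (es : list (nat * nat)) (ws : list nat) (x0 : list bool)
  (t : nat) : R :=
  Rsum (bitstrings (length es)) (surv n es ws x0 t).

Definition simple_graph (n : nat) (es : list (nat * nat)) : Prop :=
  (forall e, In e es -> (fst e < n)%nat /\ (snd e < n)%nat /\ fst e <> snd e) /\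
  (forall i j, (i < length es)%nat -> (j < length es)%nat -> i <> j ->
     nth i es (0%nat, 0%nat) <> nth j es (0%nat, 0%nat) /\
     nth i es (0%nat, 0%nat) <> (snd (nth j es (0%nat, 0%nat)), fst (nth j es (0%nat, 0%nat)))).

Definition connected_graph (n : nat) (es : list (nat * nat)) : Prop :=
  forall u v, (u < n)%nat -> (v < n)%nat -> reach es u v.

Definition wmax (ws : list nat) : nat := fold_right Nat.max 0%nat ws.

From Stdlib Require Import Reals List Arith Lia Bool Classical ClassicalEpsilon Permutation Lra Wf_nat.
Import ListNotations.

(* Multiplicative drift on the potential w(x) - w(opt).  Deleting a tree edge k from a spanning
   tree x splits the vertices into two sides; exchanging k for the lightest edge crossing this cut,
   of weight c_k, gives a spanning tree lighter by w_k - c_k.  A layer-cake count shows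
   sum_k c_k <= w(opt): for every threshold t, the tree edges whose cut is crossed only by edges
   heavier than t are charged injectively to edges of opt heavier than t.  The improving exchanges
   are distinct 2-bit mutations, each of probability at least 1/(e m^2), so one step lowers the
   expected potential by the factor 1 - 1/(e m^2).  Hence Pr[T > t] <= min(1, m w_max (1 -
   1/(e m^2))^t), whose sum is at most e m^2 (ln (m w_max) + 1) + 1. *)

Lemma nat_least (P : nat -> Prop) :
  (exists k, P k) -> exists k, P k /\ forall k', P k' -> (k <= k')%nat.
Proof.
  intros HP.
  destruct (dec_inh_nat_subset_has_unique_least_element P (fun k => classic (P k)) HP)
    as [k [Hk _]].
  now exists k.
Qed.

Section Reachability.

Variable H : list (nat * nat).

Lemma reach_trans a b c : reach H a b -> reach H b c -> reach H a c.
Proof. induction 1; intros; [assumption|]. eapply reach_step; eauto. Qed.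

Lemma reach_edge a b : In (a, b) H \/ In (b, a) H -> reach H a b.
Proof. intros. eapply reach_step; eauto. apply reach_refl. Qed.

Lemma reach_in e : In e H -> reach H (fst e) (snd e).
Proof. destruct e; intros; apply reach_edge; auto. Qed.

Lemma reach_sym a b : reach H a b -> reach H b a.
Proof.
  induction 1; [apply reach_refl|].
  eapply reach_trans; eauto. apply reach_edge. tauto.
Qed.

End Reachability.

Lemma reach_mono H1 H2 a b : incl H1 H2 -> reach H1 a b -> reach H2 a b.
Proof.
  intros Hincl. induction 1; [apply reach_refl|].
  eapply reach_step; eauto. destruct H; auto.
Qed.

Lemma reach_split H1 H2 e a b : (forall f, In f H2 -> In f H1 \/ f = e) ->
  reach H2 a b ->
  reach H1 a b \/ (reach H1 a (fst e) /\ reach H1 (snd e) b)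
               \/ (reach H1 a (snd e) /\ reach H1 (fst e) b).
Proof.
  destruct e as [p q]; simpl. intros Hs. induction 1 as [a|u v b Huv _ IH].
  { left; apply reach_refl. }
  assert (Hstep : reach H1 u v \/ (u = p /\ v = q) \/ (u = q /\ v = p)).
  { destruct Huv as [Huv|Huv]; destruct (Hs _ Huv) as [He|He];
      try (left; apply reach_edge; tauto); injection He; intros; subst; tauto. }
  destruct Hstep as [Hstep|[[-> ->]|[-> ->]]];
    destruct IH as [IH|[[IH1 IH2]|[IH1 IH2]]];
    eauto 6 using reach_trans, reach_refl.
Qed.

Lemma reach_replace_edge H1 H2 e a b : (forall f, In f H2 -> In f H1 \/ f = e) ->
  reach H1 (fst e) (snd e) -> reach H2 a b -> reach H1 a b.
Proof.
  intros Hs He Hab.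
  destruct (reach_split H1 H2 e a b Hs Hab) as [R|[[R1 R2]|[R1 R2]]]; auto.
  - eauto using reach_trans.
  - eauto using reach_trans, reach_sym.
Qed.

Inductive walk (H : list (nat * nat)) : nat -> nat -> nat -> Prop :=
| walk_nil a : walk H 0 a a
| walk_snoc k a b c : walk H k a b -> In (b, c) H \/ In (c, b) H -> walk H (S k) a c.

Lemma walk_cons H k u v w : In (u, v) H \/ In (v, u) H -> walk H k v w -> walk H (S k) u w.
Proof.
  intros Huv. induction 1.
  - econstructor; [apply walk_nil|tauto].
  - econstructor; eauto.
Qed.

Lemma reach_walk H a b : reach H a b -> exists k, walk H k a b.
Proof.
  induction 1 as [a|u v w Huv _ [k Hk]].
  - exists 0%nat; apply walk_nil.
  - exists (S k); eapply walk_cons; eauto.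
Qed.

Fixpoint set_bit (l : list bool) (k : nat) (b : bool) : list bool :=
  match l, k with
  | [], _ => []
  | _ :: l', O => b :: l'
  | a :: l', S k' => a :: set_bit l' k' b
  end.

Lemma set_bit_length l k b : length (set_bit l k b) = length l.
Proof. revert k; induction l; destruct k; simpl; auto. Qed.

Lemma nth_set_bit l k b k' :
  (k < length l)%nat -> nth k' (set_bit l k b) false = if k' =? k then b else nth k' l false.
Proof.
  revert k k'; induction l as [|a l IH]; intros [|k] [|k'] Hk; simpl in *; try lia; auto.
  apply IH; lia.
Qed.

Definition exchange (x : list bool) (i j : nat) : list bool := set_bit (set_bit x i false) j true.

Lemma exchange_length x i j : length (exchange x i j) = length x.
Proof. unfold exchange; rewrite !set_bit_length; auto. Qed.

Lemma nth_exchange x i j k : (i < length x)%nat -> (j < length x)%nat ->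
  nth k (exchange x i j) false = (k =? j) || (negb (k =? i) && nth k x false).
Proof.
  intros Hi Hj. unfold exchange.
  rewrite nth_set_bit by (rewrite set_bit_length; auto). rewrite nth_set_bit by auto.
  destruct (k =? j), (k =? i); auto.
Qed.

Section EdgeSelection.

Variable es : list (nat * nat).
Notation m := (length es).

Definition edge (i : nat) : nat * nat := nth i es (0%nat, 0%nat).
Definition tree_edges (x : list bool) := sel_edges es x (fun _ => true).
Definition edges_minus (x : list bool) (i : nat) := sel_edges es x (fun j => negb (j =? i)).

Definition crosses (x : list bool) (i j : nat) : Prop :=
  ~ reach (edges_minus x i) (fst (edge j)) (snd (edge j)).

Lemma in_combine_seq (l : list (nat * nat)) s k e :
  In (k, e) (combine (seq s (length l)) l) <->
  (s <= k < s + length l)%nat /\ nth (k - s) l (0%nat, 0%nat) = e.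
Proof.
  revert s; induction l as [|a l IH]; intros s; cbn [length seq combine In].
  { split; [tauto|lia]. }
  rewrite IH. split.
  - intros [He|[Hk He]].
    + injection He; intros; subst. rewrite Nat.sub_diag. split; auto; lia.
    + split; [lia|]. replace (k - s)%nat with (S (k - S s)) by lia. auto.
  - intros [Hk He]. destruct (Nat.eq_dec k s) as [->|Hne].
    + rewrite Nat.sub_diag in He. subst; auto.
    + right; split; [lia|]. replace (k - s)%nat with (S (k - S s)) in He by lia. auto.
Qed.

Lemma in_sel_edges x keep e : In e (sel_edges es x keep) <->
  exists k, (k < m)%nat /\ nth k x false = true /\ keep k = true /\ edge k = e.
Proof.
  unfold sel_edges. rewrite in_map_iff. split.
  - intros [[k e'] [He Hin]]. simpl in He; subst e'.
    apply filter_In in Hin as [Hin Hb]. apply in_combine_seq in Hin.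
    rewrite Nat.sub_0_r in Hin. apply andb_true_iff in Hb. exists k; intuition.
  - intros [k (Hk & Hx & Hkeep & He)]. exists (k, e); split; auto.
    apply filter_In; split.
    + apply in_combine_seq. rewrite Nat.sub_0_r; split; auto; lia.
    + simpl. rewrite Hx, Hkeep; auto.
Qed.

Lemma sel_edges_incl x y keep keep' :
  (forall k, (k < m)%nat -> nth k x false = true -> keep k = true ->
     nth k y false = true /\ keep' k = true) ->
  incl (sel_edges es x keep) (sel_edges es y keep').
Proof.
  intros Hk e He. apply in_sel_edges in He as [k (? & ? & ? & ?)].
  apply in_sel_edges. exists k. destruct (Hk k) as [? ?]; auto.
Qed.

Lemma sel_edges_weaken x keep keep' :
  (forall k, keep k = true -> keep' k = true) -> incl (sel_edges es x keep) (sel_edges es x keep').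
Proof. intros Hk. apply sel_edges_incl; auto. Qed.

Lemma sel_edges_split x keep i e : In e (sel_edges es x keep) ->
  In e (sel_edges es x (fun k => keep k && negb (k =? i))) \/ e = edge i.
Proof.
  intros He. apply in_sel_edges in He as [k (Hk & Hx & Hkeep & <-)].
  destruct (Nat.eq_dec k i) as [->|Hne]; [now right|left].
  apply in_sel_edges. exists k. rewrite Hkeep. repeat split; auto.
  apply negb_true_iff, Nat.eqb_neq; auto.
Qed.

Lemma edge_in_edges_minus x i j :
  (j < m)%nat -> nth j x false = true -> j <> i -> In (edge j) (edges_minus x i).
Proof.
  intros. apply in_sel_edges. exists j. repeat split; auto.
  apply negb_true_iff, Nat.eqb_neq; auto.
Qed.

Lemma crosses_unselected x i j :
  (j < m)%nat -> j <> i -> crosses x i j -> nth j x false = false.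
Proof.
  intros Hj Hji Hc. destruct (nth j x false) eqn:E; auto.
  exfalso. apply Hc, reach_in, edge_in_edges_minus; auto.
Qed.

Lemma in_exchange_edges x i j keep e : length x = m -> (i < m)%nat -> (j < m)%nat ->
  In e (sel_edges es (exchange x i j) keep) <->
  (keep j = true /\ e = edge j) \/ In e (sel_edges es x (fun k => keep k && negb (k =? i))).
Proof.
  intros Hx Hi Hj. rewrite !in_sel_edges. split.
  - intros [k (Hk & Hy & Hkeep & <-)]. rewrite nth_exchange in Hy by lia.
    destruct (Nat.eqb_spec k j) as [->|Hkj]; [now left|right].
    exists k. rewrite Hkeep. simpl in Hy. apply andb_true_iff in Hy as [? ?]. auto.
  - intros [[Hkeep ->]|[k (Hk & Hxk & Hkeep & <-)]].
    + exists j. rewrite nth_exchange, Nat.eqb_refl by lia. auto.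
    + exists k. apply andb_true_iff in Hkeep as [Hkeep Hki].
      rewrite nth_exchange, Hki, Hxk, orb_true_r by lia. auto.
Qed.

Section Exchange.

Variable n : nat.
Hypothesis edge_range : forall e, In e es -> (fst e < n)%nat /\ (snd e < n)%nat.

Lemma edge_lt i : (i < m)%nat -> (fst (edge i) < n)%nat /\ (snd (edge i) < n)%nat.
Proof. intros; apply edge_range, nth_In; auto. Qed.

Variables (x : list bool) (i j : nat).
Hypotheses (Htree : is_spanning_tree n es x) (Hi : (i < m)%nat) (Hj : (j < m)%nat)
  (Hcross : crosses x i j).

Let y := exchange x i j.

Lemma exchange_tree_edges e : In e (tree_edges y) <-> e = edge j \/ In e (edges_minus x i).
Proof. unfold tree_edges, y. rewrite in_exchange_edges by (apply Htree || auto). tauto. Qed.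

Lemma exchange_reconnects : reach (tree_edges y) (fst (edge i)) (snd (edge i)).
Proof.
  assert (Hminus : incl (edges_minus x i) (tree_edges y))
    by (intros e He; apply exchange_tree_edges; auto).
  assert (Hjy : reach (tree_edges y) (fst (edge j)) (snd (edge j)))
    by (apply reach_in, exchange_tree_edges; auto).
  destruct (edge_lt j Hj) as [Hp Hq].
  destruct (reach_split _ _ _ _ _ (sel_edges_split x _ i) (proj1 (proj2 Htree) _ _ Hp Hq))
    as [R|[[R1 R2]|[R1 R2]]]; [contradiction| |];
    apply reach_mono with (H2 := tree_edges y) in R1, R2; auto; eauto using reach_trans, reach_sym.
Qed.

Lemma exchange_acyclic g : (g < m)%nat -> nth g y false = true -> crosses y g g.
Proof.
  intros Hg Hyg Hreach.
  destruct (Nat.eq_dec g j) as [->|Hgj].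
  - apply Hcross. revert Hreach. apply reach_mono. intros e He.
    unfold edges_minus, y in He. apply in_exchange_edges in He as [[Hjj _]|He]; try apply Htree; auto.
    + rewrite Nat.eqb_refl in Hjj; discriminate.
    + revert He. apply sel_edges_weaken. intros k Hk. apply andb_true_iff in Hk; tauto.
  - unfold y in Hyg. rewrite nth_exchange in Hyg by (rewrite (proj1 Htree); auto).
    apply Nat.eqb_neq in Hgj as Hgj'. rewrite Hgj' in Hyg. simpl in Hyg.
    apply andb_true_iff in Hyg as [Hgi Hxg]. apply negb_true_iff, Nat.eqb_neq in Hgi.
    set (both := sel_edges es x (fun k => negb (k =? g) && negb (k =? i))).
    assert (Hboth_g : incl both (edges_minus x g))
      by (apply sel_edges_weaken; intros k Hk; apply andb_true_iff in Hk; tauto).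
    assert (Hboth_i : incl both (edges_minus x i))
      by (apply sel_edges_weaken; intros k Hk; apply andb_true_iff in Hk; tauto).
    assert (Hsplit : forall e, In e (edges_minus y g) -> In e both \/ e = edge j).
    { intros e He. unfold edges_minus, y in He. apply in_exchange_edges in He; try apply Htree; auto. tauto. }
    assert (Hg_i : reach (edges_minus x i) (fst (edge g)) (snd (edge g)))
      by (apply reach_in, edge_in_edges_minus; auto).
    destruct (reach_split _ _ _ _ _ Hsplit Hreach) as [R|[[R1 R2]|[R1 R2]]].
    + apply (proj2 (proj2 Htree) g Hg Hxg). eapply reach_mono; eauto.
    + apply Hcross. apply reach_mono with (H2 := edges_minus x i) in R1, R2; auto.
      eauto using reach_trans, reach_sym.
    + apply Hcross. apply reach_mono with (H2 := edges_minus x i) in R1, R2; auto.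
      eauto using reach_trans, reach_sym.
Qed.

Lemma exchange_spanning_tree : is_spanning_tree n es y.
Proof.
  split; [|split].
  - unfold y; rewrite exchange_length; apply Htree.
  - intros u v Hu Hv.
    apply (reach_replace_edge _ (tree_edges x) (edge i)); [|apply exchange_reconnects|].
    + intros e He. destruct (sel_edges_split x _ i e He) as [He'|]; auto.
      left. apply exchange_tree_edges; auto.
    + apply Htree; auto.
  - exact exchange_acyclic.
Qed.

End Exchange.

End EdgeSelection.

Section FiniteSums.

Context {A : Type}.
Implicit Types (l : list A) (f g : A -> R).

Lemma Rsum_cons a l f : Rsum (a :: l) f = f a + Rsum l f.
Proof. reflexivity. Qed.

Lemma Rsum_ext l f g : (forall a, In a l -> f a = g a) -> Rsum l f = Rsum l g.
Proof.
  induction l as [|a l IH]; intros Hfg; auto.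
  rewrite !Rsum_cons. f_equal; [apply Hfg; simpl; auto|].
  apply IH. intros; apply Hfg; simpl; auto.
Qed.

Lemma Rsum_app l1 l2 f : Rsum (l1 ++ l2) f = Rsum l1 f + Rsum l2 f.
Proof. unfold Rsum; rewrite map_app, fold_right_app. induction l1; simpl; lra. Qed.

Lemma Rsum_plus l f g : Rsum l (fun a => f a + g a) = Rsum l f + Rsum l g.
Proof. induction l; [unfold Rsum; simpl; ring|]. rewrite !Rsum_cons, IHl; ring. Qed.

Lemma Rsum_minus l f g : Rsum l (fun a => f a - g a) = Rsum l f - Rsum l g.
Proof. induction l; [unfold Rsum; simpl; ring|]. rewrite !Rsum_cons, IHl; ring. Qed.

Lemma Rsum_mult_l l c f : Rsum l (fun a => c * f a) = c * Rsum l f.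
Proof. induction l; [unfold Rsum; simpl; ring|]. rewrite !Rsum_cons, IHl; ring. Qed.

Lemma Rsum_mult_r l c f : Rsum l (fun a => f a * c) = Rsum l f * c.
Proof. induction l; [unfold Rsum; simpl; ring|]. rewrite !Rsum_cons, IHl; ring. Qed.

Lemma Rsum_le l f g : (forall a, In a l -> f a <= g a) -> Rsum l f <= Rsum l g.
Proof.
  induction l as [|a l IH]; intros Hfg; [unfold Rsum; simpl; lra|].
  rewrite !Rsum_cons. apply Rplus_le_compat; [|apply IH]; intros; apply Hfg; simpl; auto.
Qed.

Lemma Rsum_zero l f : (forall a, In a l -> f a = 0) -> Rsum l f = 0.
Proof.
  intros Hf. transitivity (Rsum l (fun _ => 0)); [now apply Rsum_ext|].
  induction l; auto. rewrite Rsum_cons, IHl; [ring|]. intros; apply Hf; simpl; auto.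
Qed.

Lemma Rsum_nonneg l f : (forall a, In a l -> 0 <= f a) -> 0 <= Rsum l f.
Proof. intros Hf. rewrite <- (Rsum_zero l (fun _ => 0)) by auto. now apply Rsum_le. Qed.

Lemma Rsum_perm l1 l2 f : Permutation l1 l2 -> Rsum l1 f = Rsum l2 f.
Proof. induction 1; rewrite ?Rsum_cons; try congruence. unfold Rsum; simpl; ring. Qed.

Lemma Rsum_incl l1 l2 f : NoDup l1 -> incl l1 l2 -> (forall a, In a l2 -> 0 <= f a) ->
  Rsum l1 f <= Rsum l2 f.
Proof.
  revert l2; induction l1 as [|a l1 IH]; intros l2 Hnd Hincl Hf.
  { now apply Rsum_nonneg. }
  destruct (in_split a l2) as (l & l' & ->); [apply Hincl; simpl; auto|].
  rewrite (Rsum_perm (l ++ a :: l') (a :: l ++ l')) by (symmetry; apply Permutation_middle).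
  rewrite !Rsum_cons. inversion Hnd as [|? ? Hnotin Hnd']; subst.
  apply Rplus_le_compat_l, IH; auto.
  - intros b Hb. assert (Hb' : In b (l ++ a :: l')) by (apply Hincl; simpl; auto).
    apply in_app_iff in Hb' as [|[->|]]; [apply in_app_iff; auto|contradiction|apply in_app_iff; auto].
  - intros b Hb. apply Hf, in_app_iff. apply in_app_iff in Hb; simpl; tauto.
Qed.

Lemma Rsum_filter (p : A -> bool) l f :
  Rsum (filter p l) f = Rsum l (fun a => if p a then f a else 0).
Proof.
  induction l as [|a l IH]; [reflexivity|]. cbn [filter]. rewrite Rsum_cons.
  destruct (p a); rewrite ?Rsum_cons, IH; ring.
Qed.

Lemma Rsum_indicator l a f : NoDup l -> In a l ->
  Rsum l (fun b => indicator (a = b) * f b) = f a.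
Proof.
  unfold indicator.
  induction l as [|b l IH]; intros Hnd Hin; [destruct Hin|].
  inversion Hnd as [|? ? Hnotin Hnd']; subst. rewrite Rsum_cons.
  destruct (excluded_middle_informative (a = b)) as [->|Hne].
  - rewrite Rsum_zero; [ring|]. intros c Hc.
    destruct (excluded_middle_informative (b = c)) as [->|]; [contradiction|ring].
  - destruct Hin as [->|Hin]; [contradiction|]. rewrite IH; auto. ring.
Qed.

End FiniteSums.

Lemma indicator_bounds (P : Prop) : 0 <= indicator P <= 1.
Proof. unfold indicator; destruct (excluded_middle_informative P); lra. Qed.

Lemma Rsum_map {A B} (l : list A) (g : A -> B) f : Rsum (map g l) f = Rsum l (fun a => f (g a)).
Proof. unfold Rsum; rewrite map_map; auto. Qed.

Lemma Rsum_swap {A B} (l1 : list A) (l2 : list B) f :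
  Rsum l1 (fun a => Rsum l2 (fun b => f a b)) = Rsum l2 (fun b => Rsum l1 (fun a => f a b)).
Proof.
  induction l1 as [|a l1 IH]; [symmetry; now apply Rsum_zero|].
  rewrite Rsum_cons, IH, <- Rsum_plus. apply Rsum_ext; intros; now rewrite Rsum_cons.
Qed.

Lemma INR_length_filter {A} (p : A -> bool) l :
  INR (length (filter p l)) = Rsum l (fun a => if p a then 1 else 0).
Proof.
  induction l as [|a l IH]; auto. cbn [filter]. rewrite Rsum_cons, <- IH.
  destruct (p a); simpl length; rewrite ?S_INR; ring.
Qed.

Lemma INR_layer_cake c W : (c <= W)%nat ->
  INR c = Rsum (seq 0 W) (fun t => if t <? c then 1 else 0).
Proof.
  intros Hc. rewrite <- INR_length_filter. f_equal.
  enough (Hmin : forall V, length (filter (fun t => t <? c) (seq 0 V)) = Nat.min c V) by (rewrite Hmin; lia).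
  induction V as [|V IH]; [simpl; lia|].
  rewrite seq_S, filter_app, length_app, IH. simpl. destruct (Nat.ltb_spec V c); simpl; lia.
Qed.

Lemma INR_weight ws y : length y = length ws ->
  INR (weight ws y) = Rsum (seq 0 (length y)) (fun k => if nth k y false then INR (nth k ws 0%nat) else 0).
Proof.
  revert ws; induction y as [|b y IH]; intros [|v ws] Hlen; try discriminate; auto.
  unfold weight in *. cbn [combine map fold_right length fst snd].
  rewrite plus_INR, IH by auto.
  cbn [seq]. rewrite <- seq_shift, Rsum_cons, Rsum_map. destruct b; simpl; ring.
Qed.

Lemma Rsum_layer_cake (l : list nat) (b : nat -> bool) (f : nat -> nat) W :
  (forall k, In k l -> b k = true -> (f k <= W)%nat) ->
  Rsum l (fun k => if b k then INR (f k) else 0) =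
  Rsum (seq 0 W) (fun t => INR (length (filter (fun k => b k && (t <? f k)) l))).
Proof.
  intros Hf.
  transitivity (Rsum (seq 0 W) (fun t => Rsum l (fun k => if b k && (t <? f k) then 1 else 0)));
    [|apply Rsum_ext; intros; symmetry; apply INR_length_filter].
  rewrite <- Rsum_swap. apply Rsum_ext. intros k Hk.
  destruct (b k) eqn:Hb; simpl.
  - apply INR_layer_cake, Hf; auto.
  - symmetry; now apply Rsum_zero.
Qed.

Lemma wmax_ge ws k : (nth k ws 0 <= wmax ws)%nat.
Proof. revert k; induction ws as [|v ws IH]; intros [|k]; simpl; try lia. specialize (IH k); lia. Qed.

Lemma weight_set_bit ws x k b : length x = length ws -> (k < length x)%nat ->
  (weight ws (set_bit x k b) + (if nth k x false then nth k ws 0 else 0) =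
   weight ws x + (if b then nth k ws 0 else 0))%nat.
Proof.
  revert ws k; induction x as [|a x IH]; intros [|v ws] [|k] Hlen Hk; simpl in *; try lia;
    unfold weight in *; simpl in *.
  - destruct a, b; lia.
  - specialize (IH ws k ltac:(lia) ltac:(lia)). lia.
Qed.

Lemma weight_exchange ws x i j : length x = length ws ->
  (i < length x)%nat -> (j < length x)%nat -> i <> j ->
  nth i x false = true -> nth j x false = false ->
  (weight ws (exchange x i j) + nth i ws 0 = weight ws x + nth j ws 0)%nat.
Proof.
  intros Hlen Hi Hj Hij Hxi Hxj.
  pose proof (weight_set_bit ws x i false Hlen Hi) as Hdrop. rewrite Hxi in Hdrop.
  pose proof (weight_set_bit ws (set_bit x i false) j true) as Hadd.
  rewrite set_bit_length, nth_set_bit in Hadd by auto.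
  apply Nat.eqb_neq in Hij. rewrite Nat.eqb_sym, Hij, Hxj in Hadd.
  specialize (Hadd Hlen Hj). unfold exchange. lia.
Qed.

Lemma weight_bound ws x : (weight ws x <= length ws * wmax ws)%nat.
Proof.
  revert x; induction ws as [|v ws IH]; intros [|a x]; unfold weight in *; simpl; try lia.
  specialize (IH x). destruct a; simpl; nia.
Qed.

Lemma length_le_of_injective_rel (A B : list nat) (Rel : nat -> nat -> Prop) : NoDup A ->
  (forall a, In a A -> exists b, In b B /\ Rel a b) ->
  (forall a a' b, In a A -> In a' A -> Rel a b -> Rel a' b -> a = a') ->
  (length A <= length B)%nat.
Proof.
  revert B; induction A as [|a A IH]; intros B Hnd Hex Hinj; simpl; [lia|].
  inversion Hnd as [|? ? Hnotin Hnd']; subst.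
  destruct (Hex a (or_introl eq_refl)) as [b [Hb Hab]].
  enough (length A <= length (remove Nat.eq_dec b B))%nat
    by (pose proof (remove_length_lt Nat.eq_dec B b Hb); lia).
  apply IH; auto.
  - intros a' Ha'. destruct (Hex a' (or_intror Ha')) as [b' [Hb' Hab']].
    exists b'; split; auto. apply in_in_remove; auto.
    intros ->. assert (a' = a) by (apply (Hinj a' a b); simpl; auto). subst; auto.
  - intros; eapply Hinj; simpl; eauto.
Qed.

Section CutWeights.

Variables (n : nat) (es : list (nat * nat)) (ws : list nat).
Hypothesis edge_range : forall e, In e es -> (fst e < n)%nat /\ (snd e < n)%nat.
Hypothesis n_pos : (0 < n)%nat.

Notation m := (length es).
Notation w k := (nth k ws 0%nat).
Notation edge := (edge es).
Notation tree_edges := (tree_edges es).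
Notation edges_minus := (edges_minus es).
Notation crosses := (crosses es).
Notation tree := (is_spanning_tree n es).

Definition lightest_crossing x i j : Prop :=
  (j < m)%nat /\ crosses x i j /\ forall j', (j' < m)%nat -> crosses x i j' -> (w j <= w j')%nat.

Lemma lightest_crossing_exists x i : tree x -> (i < m)%nat -> nth i x false = true ->
  exists j, lightest_crossing x i j.
Proof.
  intros Ht Hi Hx.
  destruct (nat_least (fun c => exists j, (j < m)%nat /\ crosses x i j /\ w j = c))
    as [c [[j (Hj & Hc & <-)] Hleast]].
  { exists (w i), i. repeat split; auto. apply Ht; auto. }
  exists j. repeat split; auto. intros j' Hj' Hc'. apply Hleast. eauto.
Qed.

Definition partner x i : nat := epsilon (inhabits 0%nat) (lightest_crossing x i).
Definition cut_weight x i : nat := w (partner x i).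

Section Partner.

Variables (x : list bool) (i : nat).
Hypotheses (Htree : tree x) (Hi : (i < m)%nat) (Hxi : nth i x false = true).

Lemma partner_spec : lightest_crossing x i (partner x i).
Proof. unfold partner. apply epsilon_spec, lightest_crossing_exists; auto. Qed.

Lemma cut_weight_le_crossing j : (j < m)%nat -> crosses x i j -> (cut_weight x i <= w j)%nat.
Proof. apply partner_spec. Qed.

Lemma cut_weight_le : (cut_weight x i <= w i)%nat.
Proof. apply cut_weight_le_crossing; auto. apply Htree; auto. Qed.

End Partner.

Definition light_edges t := map edge (filter (fun k => w k <=? t) (seq 0 m)).

Lemma in_light_edges t e :
  In e (light_edges t) <-> exists k, (k < m)%nat /\ (w k <= t)%nat /\ edge k = e.
Proof.
  unfold light_edges. rewrite in_map_iff. split.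
  - intros [k [<- Hk]]. apply filter_In in Hk as [Hk Hw]. apply in_seq in Hk.
    apply Nat.leb_le in Hw. exists k; repeat split; auto; lia.
  - intros [k (Hk & Hw & <-)]. exists k. split; auto.
    apply filter_In. split; [apply in_seq; lia|]. now apply Nat.leb_le.
Qed.

(* If every edge crossing the cut of [i] is heavier than [t], light edges never cross it. *)
Lemma light_reach_within_cut x i t c z z' : tree x -> (i < m)%nat -> nth i x false = true ->
  (t < cut_weight x i)%nat ->
  reach (edges_minus x i) c z -> reach (light_edges t) z z' -> reach (edges_minus x i) c z'.
Proof.
  intros Ht Hi Hxi Hheavy Hz Hlight. revert Hz.
  induction Hlight as [u|u v z' Huv _ IH]; intros Hu; auto.
  apply IH. apply NNPP. intros Hv.
  assert (Hk : exists k, (k < m)%nat /\ (w k <= t)%nat /\ (edge k = (u, v) \/ edge k = (v, u)))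
    by (destruct Huv as [He|He]; apply in_light_edges in He as [k ?]; exists k; tauto).
  destruct Hk as [k (Hk & Hwk & Hek)].
  enough (cut_weight x i <= w k)%nat by lia.
  apply cut_weight_le_crossing; auto. intros Rk. apply Hv.
  destruct Hek as [E|E]; rewrite E in Rk; simpl in Rk; eauto using reach_trans, reach_sym.
Qed.

Definition far_end x i :=
  if excluded_middle_informative (reach (edges_minus x i) 0 (fst (edge i)))
  then snd (edge i) else fst (edge i).
Definition near_end x i :=
  if excluded_middle_informative (reach (edges_minus x i) 0 (fst (edge i)))
  then fst (edge i) else snd (edge i).

Lemma far_end_spec x i : tree x -> (i < m)%nat -> nth i x false = true ->
  ~ reach (edges_minus x i) (far_end x i) 0 /\ reach (edges_minus x i) 0 (near_end x i) /\
  (edge i = (near_end x i, far_end x i) \/ edge i = (far_end x i, near_end x i)) /\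
  (far_end x i < n)%nat.
Proof.
  intros Ht Hi Hx. assert (Hc : crosses x i i) by (apply Ht; auto).
  destruct (edge_lt es n edge_range i Hi) as [Ha Hb].
  unfold far_end, near_end; destruct (excluded_middle_informative _) as [R|R].
  - repeat split; auto.
    + intros R'. apply Hc. eauto using reach_trans, reach_sym.
    + left; destruct (edge i); auto.
  - repeat split; auto.
    + intros R'; apply R, reach_sym; auto.
    + destruct (reach_split _ _ _ 0 _ (sel_edges_split es x _ i) (proj1 (proj2 Ht) 0%nat _ n_pos Hb))
        as [X|[[X Y]|[X Y]]]; auto; contradiction.
    + right; destruct (edge i); auto.
Qed.

Lemma near_end_avoids_far_edge x i i' : tree x ->
  (i < m)%nat -> nth i x false = true -> (i' < m)%nat -> nth i' x false = true -> i <> i' ->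
  reach (edges_minus x i) (far_end x i) (far_end x i') ->
  reach (edges_minus x i') 0 (near_end x i).
Proof.
  intros Ht Hi Hx Hi' Hx' Hne Hfar.
  destruct (far_end_spec x i Ht Hi Hx) as (Far & Near & _ & _).
  assert (Hends : reach (edges_minus x i) (far_end x i) (fst (edge i')) /\
                  reach (edges_minus x i) (far_end x i) (snd (edge i'))).
  { assert (Hin : reach (edges_minus x i) (fst (edge i')) (snd (edge i')))
      by (apply reach_in, edge_in_edges_minus; auto).
    destruct (far_end_spec x i' Ht Hi' Hx') as (_ & _ & [E|E] & _); rewrite E in *; simpl in *;
      split; eauto using reach_trans, reach_sym. }
  set (both := sel_edges es x (fun k => negb (k =? i) && negb (k =? i'))).
  assert (Hboth : incl both (edges_minus x i'))
    by (apply sel_edges_weaken; intros k Hk; apply andb_true_iff in Hk; tauto).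
  assert (Hboth' : incl both (edges_minus x i))
    by (apply sel_edges_weaken; intros k Hk; apply andb_true_iff in Hk; tauto).
  destruct (reach_split both _ _ _ _ (sel_edges_split es x _ i') Near)
    as [X|[[X _]|[X _]]]; [eapply reach_mono; eauto| |];
    apply reach_mono with (H2 := edges_minus x i) in X; auto;
    exfalso; apply Far; destruct Hends; eauto using reach_trans, reach_sym.
Qed.

Lemma far_end_light_injective x t i i' : tree x ->
  (i < m)%nat -> nth i x false = true -> (t < cut_weight x i)%nat ->
  (i' < m)%nat -> nth i' x false = true -> (t < cut_weight x i')%nat ->
  reach (light_edges t) (far_end x i) (far_end x i') -> i = i'.
Proof.
  intros Ht Hi Hx Hheavy Hi' Hx' Hheavy' R.
  destruct (Nat.eq_dec i i') as [|Hne]; auto. exfalso.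
  destruct (far_end_spec x i Ht Hi Hx) as (_ & _ & Edge & _).
  destruct (far_end_spec x i' Ht Hi' Hx') as (Far' & _ & _ & _).
  assert (Hnear : reach (edges_minus x i') 0 (near_end x i)).
  { apply near_end_avoids_far_edge; auto.
    eapply light_reach_within_cut; eauto. apply reach_refl. }
  assert (Hback : reach (edges_minus x i') (far_end x i') (far_end x i))
    by (eapply light_reach_within_cut; eauto; [apply reach_refl|apply reach_sym; auto]).
  apply Far'. eapply reach_trans; [apply Hback|]. eapply reach_trans; [|apply reach_sym, Hnear].
  apply reach_edge. assert (Hin : In (edge i) (edges_minus x i')) by (apply edge_in_edges_minus; auto).
  destruct Edge as [E|E]; rewrite E in Hin; auto.
Qed.


(* [j] is the last edge of a shortest [y]-walk from vertex 0 into the light component of [c]. *)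
Definition exit_edge y t c j : Prop :=
  exists z z' k, reach (light_edges t) c z /\
    (forall k', walk (tree_edges y) k' 0 z -> (S k <= k')%nat) /\
    walk (tree_edges y) k 0 z' /\ (edge j = (z', z) \/ edge j = (z, z')).

Lemma exit_edge_exists y t c :
  (forall u v, (u < n)%nat -> (v < n)%nat -> reach (tree_edges y) u v) ->
  (c < n)%nat -> ~ reach (light_edges t) c 0 ->
  exists j, ((j < m)%nat /\ nth j y false = true /\ (t < w j)%nat) /\ exit_edge y t c j.
Proof.
  intros Hy Hc Hc0.
  destruct (nat_least (fun k => exists z, reach (light_edges t) c z /\ walk (tree_edges y) k 0 z))
    as [k [[z [Hz Hwalk]] Hleast]].
  { destruct (reach_walk _ _ _ (Hy 0%nat c n_pos Hc)) as [k Hk].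
    exists k, c; split; auto. apply reach_refl. }
  destruct k as [|k].
  { inversion Hwalk; subst. contradiction. }
  inversion Hwalk as [|? ? z' ? Hwalk' Hadj]; subst.
  assert (Hj : exists j, (j < m)%nat /\ nth j y false = true /\ (edge j = (z', z) \/ edge j = (z, z')))
    by (destruct Hadj as [He|He]; apply in_sel_edges in He as [j ?]; exists j; tauto).
  destruct Hj as [j (Hj & Hyj & Hej)].
  exists j. split; [repeat split; auto|].
  - destruct (le_lt_dec (w j) t) as [Hlight|]; auto. exfalso.
    enough (S k <= k)%nat by lia. apply Hleast. exists z'. split; auto.
    eapply reach_trans; [apply Hz|]. apply reach_edge.
    assert (Hin : In (edge j) (light_edges t)) by (apply in_light_edges; eauto).
    destruct Hej as [E|E]; rewrite E in Hin; auto.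
  - exists z, z', k. repeat split; auto. intros k' Hk'. apply Hleast. eauto.
Qed.

Lemma exit_edge_functional y t c c' j :
  exit_edge y t c j -> exit_edge y t c' j -> reach (light_edges t) c c'.
Proof.
  intros (z1 & z1' & k1 & Hc1 & Hleast1 & Hwalk1 & E1) (z2 & z2' & k2 & Hc2 & Hleast2 & Hwalk2 & E2).
  assert (Hsame : z1 = z2 \/ (z1 = z2' /\ z2 = z1'))
    by (destruct E1 as [E1|E1]; destruct E2 as [E2|E2]; rewrite E1 in E2;
        injection E2; intros; subst; auto).
  destruct Hsame as [<-|[-> ->]].
  - eauto using reach_trans, reach_sym.
  - specialize (Hleast1 _ Hwalk2). specialize (Hleast2 _ Hwalk1). lia.
Qed.

(* For every threshold [t], each tree edge of [x] whose cut only has edges heavier than [t]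
   is charged to a distinct edge of [y] heavier than [t]. *)
Lemma heavy_cut_count x y t : tree x ->
  (forall u v, (u < n)%nat -> (v < n)%nat -> reach (tree_edges y) u v) ->
  (length (filter (fun k => nth k x false && (t <? cut_weight x k)) (seq 0 m)) <=
   length (filter (fun k => nth k y false && (t <? w k)) (seq 0 m)))%nat.
Proof.
  intros Ht Hy.
  assert (Hheavy : forall i, In i (filter (fun k => nth k x false && (t <? cut_weight x k)) (seq 0 m)) ->
            (i < m)%nat /\ nth i x false = true /\ (t < cut_weight x i)%nat).
  { intros i Hin. apply filter_In in Hin as [Hin Hb]. apply in_seq in Hin.
    apply andb_true_iff in Hb as [Hb1 Hb2]. apply Nat.ltb_lt in Hb2. repeat split; auto; lia. }
  apply length_le_of_injective_rel with (Rel := fun i j => exit_edge y t (far_end x i) j).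
  - apply NoDup_filter, seq_NoDup.
  - intros i Hin. destruct (Hheavy i Hin) as (Hi & Hxi & Hti).
    destruct (far_end_spec x i Ht Hi Hxi) as (Far & _ & _ & Hfar).
    destruct (exit_edge_exists y t (far_end x i)) as [j [(Hj & Hyj & Htj) Hexit]]; auto.
    { intros R. apply Far. eapply light_reach_within_cut; eauto. apply reach_refl. }
    exists j; split; auto. apply filter_In; split; [apply in_seq; lia|].
    rewrite Hyj. simpl. apply Nat.ltb_lt; auto.
  - intros i i' j Hin Hin' Hexit Hexit'.
    destruct (Hheavy i Hin) as (? & ? & ?). destruct (Hheavy i' Hin') as (? & ? & ?).
    eapply far_end_light_injective; eauto. eapply exit_edge_functional; eauto.
Qed.

Lemma cut_weights_le_weight x y : tree x -> tree y -> length ws = m ->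
  Rsum (seq 0 m) (fun k => if nth k x false then INR (cut_weight x k) else 0) <= INR (weight ws y).
Proof.
  intros Hx Hy Hws. rewrite INR_weight, (proj1 Hy) by (rewrite (proj1 Hy); auto).
  rewrite !(Rsum_layer_cake _ _ _ (wmax ws)).
  - apply Rsum_le. intros t _. apply le_INR, heavy_cut_count; auto. apply Hy.
  - intros k _ _. apply wmax_ge.
  - intros k Hk Hxk. apply in_seq in Hk.
    pose proof (cut_weight_le x k Hx ltac:(lia) Hxk). pose proof (wmax_ge ws k). lia.
Qed.

Lemma weight_le_exchange_gains x y : tree x -> tree y -> length ws = m ->
  INR (weight ws x) - INR (weight ws y) <=
  Rsum (seq 0 m) (fun k => if nth k x false then INR (w k) - INR (cut_weight x k) else 0).
Proof.
  intros Hx Hy Hws. pose proof (cut_weights_le_weight x y Hx Hy Hws).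
  rewrite INR_weight, (proj1 Hx) by (rewrite (proj1 Hx); auto).
  enough (Rsum (seq 0 m) (fun k => if nth k x false then INR (w k) - INR (cut_weight x k) else 0) =
          Rsum (seq 0 m) (fun k => if nth k x false then INR (w k) else 0) -
          Rsum (seq 0 m) (fun k => if nth k x false then INR (cut_weight x k) else 0)) by lra.
  rewrite <- Rsum_minus. apply Rsum_ext. intros k _. destruct (nth k x false); ring.
Qed.

End CutWeights.

Lemma in_bitstrings k y : In y (bitstrings k) <-> length y = k.
Proof.
  revert y; induction k as [|k IH]; intros y; simpl.
  - split; [intros [<-|[]]; auto|]. destruct y; simpl; try discriminate; auto.
  - rewrite in_app_iff, !in_map_iff. split.
    + intros [[y' [<- Hy]]|[y' [<- Hy]]]; simpl; apply IH in Hy; auto.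
    + destruct y as [|b y]; simpl; intros Hy; try discriminate. injection Hy; intros Hy'.
      apply IH in Hy'. destruct b; [right|left]; eauto.
Qed.

Lemma bitstrings_NoDup k : NoDup (bitstrings k).
Proof.
  induction k; simpl; [repeat constructor; auto|].
  apply NoDup_app; try (apply NoDup_map_NoDup_ForallPairs; auto; intros a b _ _ H; injection H; auto).
  intros y H1 H2. apply in_map_iff in H1 as [? [<- _]], H2 as [? [H _]]. discriminate.
Qed.

Lemma mut_prob_cons M a x b y : mut_prob M (a :: x) (b :: y) =
  (if Bool.eqb a b then 1 - / INR M else / INR M) * mut_prob M x y.
Proof. reflexivity. Qed.

Lemma mut_prob_nonneg M x y : (1 <= M)%nat -> 0 <= mut_prob M x y.
Proof.
  intros HM. assert (1 <= INR M) by (apply (le_INR 1); auto).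
  assert (0 < / INR M <= 1) by (split; [apply Rinv_0_lt_compat; lra|rewrite <- Rinv_1; apply Rinv_le_contravar; lra]).
  revert y; induction x; destruct y; try (unfold mut_prob; simpl; lra).
  rewrite mut_prob_cons. apply Rmult_le_pos; auto. destruct (Bool.eqb _ _); lra.
Qed.

Lemma mut_prob_sum M x : Rsum (bitstrings (length x)) (mut_prob M x) = 1.
Proof.
  induction x as [|a x IH]; [unfold Rsum, mut_prob; simpl; ring|].
  simpl length. simpl bitstrings. rewrite Rsum_app, !Rsum_map.
  rewrite (Rsum_ext _ (fun y => mut_prob M (a :: x) (false :: y))
                      (fun y => (if Bool.eqb a false then 1 - / INR M else / INR M) * mut_prob M x y))
    by (intros; apply mut_prob_cons).
  rewrite (Rsum_ext _ (fun y => mut_prob M (a :: x) (true :: y))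
                      (fun y => (if Bool.eqb a true then 1 - / INR M else / INR M) * mut_prob M x y))
    by (intros; apply mut_prob_cons).
  rewrite !Rsum_mult_l, IH. destruct a; simpl; ring.
Qed.

Fixpoint hamming (x y : list bool) : nat :=
  match x, y with
  | a :: x', b :: y' => ((if Bool.eqb a b then 0 else 1) + hamming x' y')%nat
  | _, _ => 0%nat
  end.

Lemma hamming_le x y : (hamming x y <= length x)%nat.
Proof. revert y; induction x; destruct y; simpl; try lia. specialize (IHx y). destruct (Bool.eqb _ _); lia. Qed.

Lemma hamming_refl x : hamming x x = 0%nat.
Proof. induction x; simpl; auto. rewrite eqb_reflx; auto. Qed.

Lemma hamming_set_bit x y k b : length x = length y -> (k < length y)%nat ->
  (hamming x (set_bit y k b) + (if Bool.eqb (nth k x false) (nth k y false) then 0 else 1) =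
   hamming x y + (if Bool.eqb (nth k x false) b then 0 else 1))%nat.
Proof.
  revert y k; induction x as [|a x IH]; intros [|c y] [|k] Hlen Hk; simpl in *; try lia.
  specialize (IH y k ltac:(lia) ltac:(lia)). lia.
Qed.

Lemma hamming_exchange x i j : (i < length x)%nat -> (j < length x)%nat -> i <> j ->
  nth i x false = true -> nth j x false = false -> hamming x (exchange x i j) = 2%nat.
Proof.
  intros Hi Hj Hij Hxi Hxj.
  pose proof (hamming_set_bit x x i false eq_refl Hi) as Hflip1.
  rewrite hamming_refl, Hxi in Hflip1. simpl in Hflip1.
  pose proof (hamming_set_bit x (set_bit x i false) j true) as Hflip2.
  rewrite !set_bit_length in Hflip2. specialize (Hflip2 eq_refl Hj).
  rewrite nth_set_bit in Hflip2 by auto.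
  apply Nat.eqb_neq in Hij. rewrite Nat.eqb_sym, Hij, Hxj in Hflip2. simpl in Hflip2.
  unfold exchange. lia.
Qed.

Lemma mut_prob_hamming M x y : length x = length y ->
  mut_prob M x y = (/ INR M) ^ (hamming x y) * (1 - / INR M) ^ (length x - hamming x y).
Proof.
  revert y; induction x as [|a x IH]; intros [|b y] Hlen; simpl in Hlen; try discriminate.
  { unfold mut_prob; simpl; ring. }
  rewrite mut_prob_cons, IH by lia. pose proof (hamming_le x y). cbn [hamming length].
  destruct (Bool.eqb a b).
  - rewrite Nat.add_0_l, Nat.sub_succ_l by auto. simpl. ring.
  - rewrite Nat.sub_succ. simpl. ring.
Qed.

Lemma exp_pow a k : exp a ^ k = exp (INR k * a).
Proof. rewrite <- Rpower_pow by apply exp_pos. unfold Rpower. now rewrite ln_exp. Qed.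

(* [1 - 1/M = 1 / (1 + 1/(M-1)) >= exp (-1/(M-1))] *)
Lemma pow_one_minus_inv_ge M : (2 <= M)%nat -> exp (-1) <= (1 - / INR M) ^ (M - 1).
Proof.
  intros HM. assert (HM' : 2 <= INR M) by (apply (le_INR 2); auto).
  apply Rle_trans with (exp (- / (INR M - 1)) ^ (M - 1)).
  - rewrite exp_pow, minus_INR by lia. simpl INR. right; f_equal; field; lra.
  - apply pow_incr. split; [left; apply exp_pos|].
    rewrite exp_Ropp. replace (1 - / INR M) with (/ (1 + / (INR M - 1))) by (field; lra).
    apply Rinv_le_contravar; [|apply exp_ineq1_le].
    assert (0 < / (INR M - 1)) by (apply Rinv_0_lt_compat; lra). lra.
Qed.

Lemma mut_prob_exchange_ge x i j : (i < length x)%nat -> (j < length x)%nat -> i <> j ->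
  nth i x false = true -> nth j x false = false ->
  / (exp 1 * INR (length x) ^ 2) <= mut_prob (length x) x (exchange x i j).
Proof.
  intros Hi Hj Hij Hxi Hxj.
  set (M := length x) in *. assert (HM : (2 <= M)%nat) by lia.
  assert (HM' : 2 <= INR M) by (apply (le_INR 2); auto).
  rewrite mut_prob_hamming, hamming_exchange by (rewrite ?exchange_length; auto).
  set (q := 1 - / INR M).
  assert (Hq : 0 <= q <= 1)
    by (unfold q; assert (0 < / INR M <= / 2) by (split; [apply Rinv_0_lt_compat|apply Rinv_le_contravar]; lra); lra).
  assert (Hexp : / exp 1 <= q ^ (M - 2)).
  { rewrite <- exp_Ropp. apply Rle_trans with (1 := pow_one_minus_inv_ge M HM).
    replace (M - 1)%nat with (S (M - 2)) by lia. simpl. fold q.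
    assert (0 <= q ^ (M - 2)) by (apply pow_le; lra). nra. }
  rewrite Rinv_mult, Rmult_comm, pow_inv.
  apply Rmult_le_compat_l; auto. left; apply Rinv_0_lt_compat, pow_lt; lra.
Qed.

Section Process.

Variables (n : nat) (es : list (nat * nat)) (ws : list nat) (opt : list bool).
Hypothesis edge_range : forall e, In e es -> (fst e < n)%nat /\ (snd e < n)%nat.
Hypothesis n_pos : (0 < n)%nat.
Hypothesis ws_length : length ws = length es.
Hypothesis es_nonempty : (1 <= length es)%nat.
Hypothesis opt_mst : is_mst n es ws opt.

Notation m := (length es).
Notation w k := (nth k ws 0%nat).
Notation bs := (bitstrings (length es)).
Notation tree := (is_spanning_tree n es).
Notation sel := (ea_select n es ws).
Notation mut := (mut_prob (length es)).
Notation partner := (partner es ws).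
Notation cut_weight := (cut_weight es ws).

Definition potential z := INR (weight ws z - weight ws opt).
Definition delta := / (exp 1 * INR m ^ 2).

Lemma ea_select_cases x y :
  (sel x y = y /\ tree y /\ (weight ws y <= weight ws x)%nat) \/ sel x y = x.
Proof. unfold ea_select. destruct (excluded_middle_informative _); tauto. Qed.

Lemma ea_select_tree x y : tree x -> tree (sel x y).
Proof. intros; destruct (ea_select_cases x y) as [(-> & ? & ?)| ->]; auto. Qed.

Lemma ea_select_in_bitstrings x y : In x bs -> In y bs -> In (sel x y) bs.
Proof. intros; destruct (ea_select_cases x y) as [(-> & ? & ?)| ->]; auto. Qed.

Lemma potential_nonneg z : 0 <= potential z.
Proof. apply pos_INR. Qed.

Lemma potential_ea_select_le x y : potential (sel x y) <= potential x.
Proof.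
  unfold potential. apply le_INR.
  destruct (ea_select_cases x y) as [(-> & ? & ?)| ->]; lia.
Qed.

Lemma potential_tree z : tree z -> potential z = INR (weight ws z) - INR (weight ws opt).
Proof. intros Hz. unfold potential. rewrite minus_INR; auto. apply opt_mst, Hz. Qed.

Lemma potential_ge_1 z : tree z -> ~ is_mst n es ws z -> 1 <= potential z.
Proof.
  intros Hz Hnot.
  assert (Hlt : (weight ws opt < weight ws z)%nat).
  { destruct (le_lt_dec (weight ws z) (weight ws opt)) as [Hle|]; auto. exfalso. apply Hnot.
    split; auto. intros y Hy. pose proof (proj2 opt_mst y Hy). lia. }
  unfold potential. apply (le_INR 1). lia.
Qed.

Lemma delta_bounds : 0 < delta <= 1.
Proof.
  unfold delta. assert (1 <= INR m) by (apply (le_INR 1); auto).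
  assert (1 <= exp 1) by (pose proof (exp_ineq1_le 1); lra).
  assert (1 <= INR m ^ 2) by (rewrite <- (pow1 2); apply pow_incr; lra).
  assert (Hprod : 1 <= exp 1 * INR m ^ 2) by nra.
  split; [apply Rinv_0_lt_compat; lra|].
  pose proof (Rinv_le_contravar 1 _ Rlt_0_1 Hprod). rewrite Rinv_1 in *. lra.
Qed.

Section ImprovingExchange.

Variables (x : list bool) (k : nat).
Hypotheses (Hx : tree x) (Hk : (k < m)%nat) (Hxk : nth k x false = true)
  (Himproving : (cut_weight x k < w k)%nat).

Let j := partner x k.
Let y := exchange x k j.

Lemma improving_partner : (j < m)%nat /\ j <> k /\ crosses es x k j /\ nth j x false = false.
Proof.
  destruct (partner_spec n es ws x k Hx Hk Hxk) as (Hj & Hcross & _).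
  assert (Hjk : j <> k) by (intros E; unfold cut_weight in Himproving; fold j in Himproving;
                            rewrite E in Himproving; lia).
  repeat split; auto. apply (crosses_unselected es x k j); auto.
Qed.

Lemma improving_exchange_weight : (weight ws y + w k = weight ws x + cut_weight x k)%nat.
Proof.
  destruct improving_partner as (Hj & Hjk & _ & Hxj). destruct Hx as [Hlen _].
  apply weight_exchange; rewrite ?Hlen; auto.
Qed.

Lemma improving_exchange_accepted : tree y /\ sel x y = y.
Proof.
  destruct improving_partner as (Hj & _ & Hcross & _).
  assert (Hy : tree y) by (apply exchange_spanning_tree; auto).
  split; auto. unfold ea_select. destruct (excluded_middle_informative _) as [|Hno]; auto.
  exfalso. apply Hno. split; auto. pose proof improving_exchange_weight. lia.
Qed.

Lemma improving_exchange_gain : potential x - potential y = INR (w k) - INR (cut_weight x k).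
Proof.
  rewrite !potential_tree by (apply improving_exchange_accepted || auto).
  pose proof improving_exchange_weight as Hw.
  apply (f_equal INR) in Hw. rewrite !plus_INR in Hw. lra.
Qed.

Lemma improving_exchange_prob : delta <= mut x y.
Proof.
  destruct improving_partner as (Hj & Hjk & Hcross & Hxj).
  unfold delta. rewrite <- (proj1 Hx).
  apply mut_prob_exchange_ge; rewrite ?(proj1 Hx); auto.
Qed.

End ImprovingExchange.

Definition improving_edges x := filter (fun k => nth k x false && (cut_weight x k <? w k)) (seq 0 m).

Lemma in_improving_edges x k : In k (improving_edges x) <->
  (k < m)%nat /\ nth k x false = true /\ (cut_weight x k < w k)%nat.
Proof.
  unfold improving_edges. rewrite filter_In, in_seq, andb_true_iff, Nat.ltb_lt. intuition lia.
Qed.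

Lemma improving_exchanges_NoDup x : tree x ->
  NoDup (map (fun k => exchange x k (partner x k)) (improving_edges x)).
Proof.
  intros Hx. apply NoDup_map_NoDup_ForallPairs; [|apply NoDup_filter, seq_NoDup].
  intros a b Ha Hb Hab. apply in_improving_edges in Ha as (Ha & Hxa & Himpa), Hb as (Hb & Hxb & Himpb).
  destruct (Nat.eq_dec a b) as [|Hne]; auto. exfalso.
  destruct (improving_partner x a) as (Hpa & Hpa_ne & _); auto.
  destruct (improving_partner x b) as (Hpb & _ & _); auto.
  apply (f_equal (fun z => nth a z false)) in Hab.
  rewrite !nth_exchange, Nat.eqb_refl in Hab by (rewrite (proj1 Hx); auto).
  apply Nat.eqb_neq in Hpa_ne, Hne. rewrite Nat.eqb_sym, Hpa_ne, Hne, Hxa, orb_true_r in Hab.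
  discriminate.
Qed.

(* Improving exchanges are distinct two-bit mutations, each of probability at least [delta],
   whose gains add up to at least the potential. *)
Lemma expected_gain_ge x : tree x ->
  delta * potential x <= Rsum bs (fun y => mut x y * (potential x - potential (sel x y))).
Proof.
  intros Hx. set (exch := fun k => exchange x k (partner x k)).
  apply Rle_trans with (Rsum (map exch (improving_edges x))
                          (fun y => mut x y * (potential x - potential (sel x y)))).
  2:{ apply Rsum_incl; [apply improving_exchanges_NoDup; auto| |].
      - intros y Hy. apply in_map_iff in Hy as [k [<- _]]. apply in_bitstrings.
        unfold exch. rewrite exchange_length. apply Hx.
      - intros y _. apply Rmult_le_pos; [apply mut_prob_nonneg; auto|].
        pose proof (potential_ea_select_le x y). lra. }
  rewrite Rsum_map.
  apply Rle_trans with (Rsum (improving_edges x) (fun k => delta * (INR (w k) - INR (cut_weight x k)))).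
  - rewrite Rsum_mult_l. apply Rmult_le_compat_l; [left; apply delta_bounds|].
    rewrite potential_tree by auto. unfold improving_edges. rewrite Rsum_filter.
    eapply Rle_trans; [apply (weight_le_exchange_gains n es ws); auto; apply opt_mst|].
    right. apply Rsum_ext. intros k Hk. apply in_seq in Hk.
    destruct (nth k x false) eqn:Hxk; simpl; auto.
    destruct (Nat.ltb_spec (cut_weight x k) (w k)); auto.
    pose proof (cut_weight_le n es ws x k Hx ltac:(lia) Hxk).
    replace (cut_weight x k) with (w k) by lia. ring.
  - apply Rsum_le. intros k Hk. apply in_improving_edges in Hk as (Hk & Hxk & Himp).
    unfold exch. destruct (improving_exchange_accepted x k) as [_ ->]; auto.
    rewrite improving_exchange_gain by auto.
    apply Rmult_le_compat_r; [|apply improving_exchange_prob; auto].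
    assert (INR (cut_weight x k) <= INR (w k)) by (apply le_INR; lia). lra.
Qed.

Lemma drift x : tree x -> Rsum bs (fun y => mut x y * potential (sel x y)) <= (1 - delta) * potential x.
Proof.
  intros Hx. pose proof (expected_gain_ge x Hx) as Hgain.
  assert (Hsplit : Rsum bs (fun y => mut x y * (potential x - potential (sel x y))) =
                   Rsum bs (fun y => mut x y * potential x) - Rsum bs (fun y => mut x y * potential (sel x y)))
    by (rewrite <- Rsum_minus; apply Rsum_ext; intros; ring).
  assert (Hone : Rsum bs (mut x) = 1) by (rewrite <- (proj1 Hx); apply mut_prob_sum).
  rewrite Rsum_mult_r, Hone in Hsplit. lra.
Qed.

Variable x0 : list bool.
Hypothesis x0_tree : tree x0.

Notation surv := (surv n es ws x0).
Notation mst := (is_mst n es ws).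

Lemma surv_S t z : surv (S t) z = indicator (~ mst z) *
  Rsum bs (fun x => surv t x * Rsum bs (fun y => mut x y * indicator (sel x y = z))).
Proof. reflexivity. Qed.

Lemma surv_nonneg t z : 0 <= surv t z.
Proof.
  revert z; induction t as [|t IH]; intros z; [apply indicator_bounds|].
  rewrite surv_S. apply Rmult_le_pos; [apply indicator_bounds|].
  apply Rsum_nonneg; intros x _. apply Rmult_le_pos; auto.
  apply Rsum_nonneg; intros y _. apply Rmult_le_pos; [apply mut_prob_nonneg; auto|apply indicator_bounds].
Qed.

Lemma surv_off_trees t z : ~ tree z -> surv t z = 0.
Proof.
  revert z; induction t as [|t IH]; intros z Hz.
  - simpl. unfold indicator. destruct (excluded_middle_informative _) as [[-> _]|]; [contradiction|auto].
  - rewrite surv_S, Rsum_zero; [ring|]. intros x _.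
    destruct (classic (tree x)) as [Hx|Hx]; [|rewrite IH; auto; ring].
    rewrite Rsum_zero; [ring|]. intros y _. unfold indicator.
    destruct (excluded_middle_informative _) as [E|]; [|ring].
    exfalso. apply Hz. rewrite <- E. apply ea_select_tree; auto.
Qed.

Lemma surv_support t z : surv t z <> 0 -> tree z /\ ~ mst z.
Proof.
  intros Hsurv. split.
  - apply NNPP. intros Hz. apply Hsurv, surv_off_trees; auto.
  - intros Hmst. apply Hsurv. destruct t as [|t]; [simpl|rewrite surv_S];
      unfold indicator at 1; destruct (excluded_middle_informative _); try tauto; ring.
Qed.

(* One step of the process, tested against a nonnegative [g]: dropping the indicator that
   stops the process at an MST only increases the left-hand side. *)
Lemma surv_step_le t g : (forall z, 0 <= g z) ->
  Rsum bs (fun z => surv (S t) z * g z) <=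
  Rsum bs (fun x => surv t x * Rsum bs (fun y => mut x y * g (sel x y))).
Proof.
  intros Hg.
  set (reach_z := fun z => Rsum bs (fun x => surv t x * Rsum bs (fun y => mut x y * indicator (sel x y = z)))).
  apply Rle_trans with (Rsum bs (fun z => reach_z z * g z)).
  - apply Rsum_le; intros z _. rewrite surv_S. fold (reach_z z).
    assert (0 <= reach_z z).
    { apply Rsum_nonneg; intros x _. apply Rmult_le_pos; [apply surv_nonneg|].
      apply Rsum_nonneg; intros y _. apply Rmult_le_pos; [apply mut_prob_nonneg; auto|apply indicator_bounds]. }
    pose proof (indicator_bounds (~ mst z)). pose proof (Hg z).
    rewrite Rmult_assoc. assert (0 <= reach_z z * g z) by (apply Rmult_le_pos; auto). nra.
  - right. unfold reach_z.
    rewrite (Rsum_ext bs _ (fun z => Rsum bs (fun x => surv t x *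
               Rsum bs (fun y => mut x y * (indicator (sel x y = z) * g z)))))
      by (intros z _; rewrite <- Rsum_mult_r; apply Rsum_ext; intros x _;
          rewrite Rmult_assoc, <- Rsum_mult_r; f_equal; apply Rsum_ext; intros; ring).
    rewrite Rsum_swap. apply Rsum_ext; intros x Hx.
    rewrite Rsum_mult_l. f_equal. rewrite Rsum_swap. apply Rsum_ext; intros y Hy.
    rewrite Rsum_mult_l. f_equal. apply Rsum_indicator.
    + apply bitstrings_NoDup.
    + apply ea_select_in_bitstrings; auto.
Qed.

Lemma surv_0_le z : surv 0 z <= indicator (x0 = z).
Proof.
  simpl. unfold indicator.
  destruct (excluded_middle_informative (z = x0 /\ ~ mst z)) as [[-> _]|];
    destruct (excluded_middle_informative _); try lra; tauto.
Qed.

Definition potential_mass t := Rsum bs (fun z => surv t z * potential z).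

Lemma potential_mass_S t : potential_mass (S t) <= (1 - delta) * potential_mass t.
Proof.
  unfold potential_mass. eapply Rle_trans; [apply surv_step_le, potential_nonneg|].
  rewrite <- Rsum_mult_l. apply Rsum_le. intros x _.
  destruct (classic (tree x)) as [Hx|Hx]; [|rewrite surv_off_trees; auto; right; ring].
  rewrite <- Rmult_assoc, (Rmult_comm (1 - delta)), Rmult_assoc.
  apply Rmult_le_compat_l; [apply surv_nonneg|apply drift; auto].
Qed.

Lemma potential_mass_0 : potential_mass 0 <= potential x0.
Proof.
  unfold potential_mass. rewrite <- (Rsum_indicator bs x0 potential);
    [|apply bitstrings_NoDup|apply in_bitstrings, x0_tree].
  apply Rsum_le. intros z _. apply Rmult_le_compat_r; [apply potential_nonneg|apply surv_0_le].
Qed.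

Lemma tail_le_potential_mass t : tail_prob n es ws x0 t <= potential_mass t.
Proof.
  apply Rsum_le. intros z _.
  destruct (Req_dec (surv t z) 0) as [E|E]; [rewrite E; right; ring|].
  destruct (surv_support t z E) as [Hz Hnot]. pose proof (potential_ge_1 z Hz Hnot).
  pose proof (surv_nonneg t z). nra.
Qed.

Lemma tail_nonneg t : 0 <= tail_prob n es ws x0 t.
Proof. apply Rsum_nonneg; intros; apply surv_nonneg. Qed.

Lemma tail_le_1 t : tail_prob n es ws x0 t <= 1.
Proof.
  unfold tail_prob. induction t as [|t IH].
  - rewrite <- (Rsum_indicator bs x0 (fun _ => 1)); [|apply bitstrings_NoDup|apply in_bitstrings, x0_tree].
    apply Rsum_le. intros z _. rewrite Rmult_1_r. apply surv_0_le.
  - rewrite (Rsum_ext _ _ (fun z => surv (S t) z * 1)) by (intros; ring).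
    eapply Rle_trans; [apply surv_step_le; intros; lra|].
    eapply Rle_trans; [|apply IH]. right. apply Rsum_ext. intros x Hx.
    rewrite (Rsum_ext _ _ (mut x)) by (intros; ring).
    apply in_bitstrings in Hx.
    assert (Hone : Rsum bs (mut x) = 1) by (rewrite <- Hx; apply mut_prob_sum).
    rewrite Hone. ring.
Qed.

Lemma tail_le_geometric t : tail_prob n es ws x0 t <= INR (m * wmax ws) * (1 - delta) ^ t.
Proof.
  eapply Rle_trans; [apply tail_le_potential_mass|].
  assert (Hmass : potential_mass t <= (1 - delta) ^ t * potential_mass 0).
  { induction t as [|t IH]; [simpl; lra|]. pose proof delta_bounds.
    eapply Rle_trans; [apply potential_mass_S|]. simpl. rewrite Rmult_assoc.
    apply Rmult_le_compat_l; lra. }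
  eapply Rle_trans; [apply Hmass|]. rewrite Rmult_comm.
  apply Rmult_le_compat_r; [apply pow_le; pose proof delta_bounds; lra|].
  eapply Rle_trans; [apply potential_mass_0|]. unfold potential. apply le_INR.
  pose proof (weight_bound ws x0). rewrite ws_length in *. lia.
Qed.

End Process.

Lemma mst_exists n es ws x0 : is_spanning_tree n es x0 -> exists opt, is_mst n es ws opt.
Proof.
  intros Hx0.
  destruct (nat_least (fun c => exists y, is_spanning_tree n es y /\ weight ws y = c))
    as [c [[opt [Hopt <-]] Hleast]]; eauto.
  exists opt. split; auto. intros y Hy. apply Hleast. eauto.
Qed.

Lemma infinite_sum_of_bounded_partial_sums (a : nat -> R) B :
  (forall t, 0 <= a t) -> (forall N, sum_f_R0 a N <= B) -> exists E, infinite_sum a E /\ E <= B.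
Proof.
  intros Ha Hbound.
  assert (Hgrow : Un_growing (sum_f_R0 a)) by (intros N; simpl; specialize (Ha (S N)); lra).
  destruct (growing_cv _ Hgrow) as [E HE]; [exists B; intros y [N ->]; apply Hbound|].
  exists E. split; [exact HE|].
  apply Rnot_lt_le. intros HBE. destruct (HE (E - B)) as [N HN]; [lra|].
  specialize (HN N (le_n N)). unfold R_dist in HN. apply Rabs_def2 in HN.
  specialize (Hbound N). lra.
Qed.

Lemma geometric_tail_series (a : nat -> R) K r : 0 <= r < 1 ->
  (forall t, 0 <= a t <= 1) -> (forall s, a (K + s)%nat <= r ^ s) ->
  exists E, infinite_sum a E /\ E <= INR K + / (1 - r).
Proof.
  intros Hr Ha Htail. apply infinite_sum_of_bounded_partial_sums; [apply Ha|].
  assert (Hinv : 1 <= / (1 - r))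
    by (rewrite <- Rinv_1; apply Rinv_le_contravar; lra).
  assert (Hhead : forall k, sum_f_R0 a k <= INR (S k)).
  { induction k as [|k IH]; [simpl; specialize (Ha 0%nat); lra|].
    simpl sum_f_R0. rewrite S_INR. specialize (Ha (S k)). lra. }
  assert (Htail_sum : forall s, sum_f_R0 a (K + s) <= INR K + (1 - r ^ S s) / (1 - r)).
  { induction s as [|s IH].
    - specialize (Htail 0%nat). replace (K + 0)%nat with K in * by lia.
      replace ((1 - r ^ 1) / (1 - r)) with 1 by (field; lra).
      simpl in Htail. destruct K as [|K]; [simpl; lra|].
      simpl sum_f_R0. pose proof (Hhead K). rewrite S_INR in *. lra.
    - rewrite Nat.add_succ_r. simpl sum_f_R0. specialize (Htail (S s)). rewrite Nat.add_succ_r in Htail.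
      replace ((1 - r ^ S (S s)) / (1 - r)) with ((1 - r ^ S s) / (1 - r) + r ^ S s)
        by (simpl; field; lra).
      lra. }
  intros N. destruct (le_lt_dec K N) as [HKN|HNK].
  - replace N with (K + (N - K))%nat by lia. eapply Rle_trans; [apply Htail_sum|].
    assert (0 <= r ^ S (N - K) / (1 - r))
      by (apply Rmult_le_pos; [apply pow_le; lra|left; apply Rinv_0_lt_compat; lra]).
    unfold Rdiv in *. lra.
  - eapply Rle_trans; [apply Hhead|]. apply le_INR in HNK. lra.
Qed.

Lemma exp_le a b : a <= b -> exp a <= exp b.
Proof. intros [Hlt|<-]; [left; now apply exp_increasing|lra]. Qed.

(* [K = ceil (ln D / d)] steps of contraction by [1 - d <= exp (-d)] cancel the factor [D]. *)
Lemma log_steps_contract D d : 0 < d <= 1 -> 1 <= D ->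
  exists K, INR K <= ln D / d + 1 /\ D * (1 - d) ^ K <= 1.
Proof.
  intros Hd HD.
  assert (HlnD : 0 <= ln D) by (rewrite <- ln_1; destruct HD as [HD|<-]; [left; apply ln_increasing|]; lra).
  assert (Hq : 0 <= ln D / d) by (apply Rmult_le_pos; [lra|left; apply Rinv_0_lt_compat; lra]).
  destruct (nat_least (fun K => ln D / d <= INR K)) as [K [HK Hleast]].
  { destruct (INR_unbounded (ln D / d)) as [K HK]. exists K; lra. }
  exists K. split.
  - destruct K as [|K]; [simpl; lra|].
    destruct (Rle_lt_dec (ln D / d) (INR K)) as [Hle|Hlt]; [specialize (Hleast K Hle); lia|].
    rewrite S_INR. lra.
  - apply Rle_trans with (D * exp (- d) ^ K).
    + apply Rmult_le_compat_l; [lra|]. apply pow_incr. pose proof (exp_ineq1_le (- d)). lra.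
    + rewrite exp_pow. apply Rle_trans with (D * exp (- ln D)).
      * apply Rmult_le_compat_l; [lra|]. apply exp_le.
        assert (ln D <= d * INR K); [|lra].
        apply Rle_trans with (d * (ln D / d)); [right; field; lra|]. apply Rmult_le_compat_l; lra.
      * rewrite exp_Ropp, exp_ln by lra. right; field; lra.
Qed.

Lemma runtime_bound_arith (M W K E : R) : 1 <= M -> 1 <= W ->
  K <= ln (M * W) * (exp 1 * M ^ 2) + 1 -> E <= K + exp 1 * M ^ 2 ->
  E <= 2 * exp 1 * M ^ 2 * (1 + ln M + ln W).
Proof.
  intros HM HW HK HE.
  assert (Hln : forall z, 1 <= z -> 0 <= ln z)
    by (intros z Hz; rewrite <- ln_1; destruct Hz as [Hz|<-]; [left; apply ln_increasing|]; lra).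
  rewrite ln_mult in HK by lra. pose proof (Hln M HM). pose proof (Hln W HW).
  assert (1 <= exp 1 * M ^ 2).
  { pose proof (exp_ineq1_le 1). assert (1 <= M ^ 2) by (rewrite <- (pow1 2); apply pow_incr; lra). nra. }
  nra.
Qed.

Theorem theorem11 (n : nat) (es : list (nat * nat)) (ws : list nat) (x0 : list bool) :
  simple_graph n es ->
  connected_graph n es ->
  (1 <= length es)%nat ->
  length ws = length es ->
  Forall (fun w => (1 <= w)%nat) ws ->
  is_spanning_tree n es x0 ->
  exists E : R,
    infinite_sum (tail_prob n es ws x0) E /\
    E <= 2 * exp 1 * INR (length es) ^ 2
           * (1 + ln (INR (length es)) + ln (INR (wmax ws))).
Proof.
  intros Hsimple _ Hm Hws Hpos Hx0.
  assert (edge_range : forall e, In e es -> (fst e < n)%nat /\ (snd e < n)%nat)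
    by (intros e He; destruct (proj1 Hsimple e He) as (? & ? & _); auto).
  assert (n_pos : (0 < n)%nat)
    by (destruct es as [|e es']; [simpl in Hm; lia|]; destruct (edge_range e); simpl; auto; lia).
  assert (Hwmax : (1 <= wmax ws)%nat)
    by (destruct ws as [|w0 ws']; [simpl in Hws; lia|]; inversion Hpos; subst; simpl; lia).
  destruct (mst_exists n es ws x0 Hx0) as [opt Hopt].
  set (D := INR (length es * wmax ws)).
  assert (HD : 1 <= D) by (apply (le_INR 1); nia).
  pose proof (delta_bounds es Hm) as Hdelta.
  destruct (log_steps_contract D (delta es) Hdelta HD) as [K [HK HDK]].
  destruct (geometric_tail_series (tail_prob n es ws x0) K (1 - delta es)) as [E [HE HEK]].
  - lra.
  - intros t; split; [apply tail_nonneg|apply tail_le_1]; auto.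
  - intros s. eapply Rle_trans; [apply (tail_le_geometric n es ws opt); auto|].
    rewrite pow_add, <- Rmult_assoc. fold D.
    assert (0 <= (1 - delta es) ^ s) by (apply pow_le; lra). nra.
  - exists E. split; auto.
    apply (runtime_bound_arith _ _ (INR K)); try (apply (le_INR 1); auto).
    + rewrite <- mult_INR. unfold delta, Rdiv in HK. now rewrite Rinv_inv in HK.
    + replace (1 - (1 - delta es)) with (delta es) in HEK by ring.
      unfold delta in HEK. now rewrite Rinv_inv in HEK.
Qed.
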